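(* Let $n\ge 1$, let $\mathcal{C}$ be the set of maximal flags of $\mathrm{PG}(n,q)$ and fix a point $X$. For $i,j\in[n+1]$ and any maximal flag $c$ of type $i$ with respect to $X$, the number $Q_{ij}$ of maximal flags of type $j$ with respect to $X$ that are opposite to $c$ equals $$Q_{ij}=\begin{cases}0&\text{if } i+j<n+2,\\ (q-1+\delta_{i+j,n+2})\,q^{\frac12(n^2-n)+j-2}&\text{if } i+j\ge n+2.\end{cases}$$
   Context: A maximal flag of $\mathrm{PG}(n,q)$ (projective space of $\mathbb{F}_q^{n+1}$) is $(U_1,\dots,U_n)$ with $U_1\subset\cdots\subset U_n$ subspaces of $\mathbb{F}_q^{n+1}$, $\dim U_i=i$; set $U_0=0$, $U_{n+1}=\mathbb{F}_q^{n+1}$. Two maximal flags $(U_i)$, $(V_i)$ are opposite if $U_i\cap V_{n+1-i}=0$ for all $i\in[n]$. The type of a maximal flag $(U_1,\dots,U_n)$ with respect to a point (1-dimensional subspace) $X$ is the smallest $k\in[n]$ with $X\subseteq U_k$, and $n+1$ if no such $k$ exists. $\delta$ is the Kronecker delta. *)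

From HB Require Import structures.
From mathcomp Require Import all_boot all_order all_algebra all_field.
Set Implicit Arguments. Unset Strict Implicit. Unset Printing Implicit Defensive.
Import GRing.Theory.
Import VectorInternalTheory.

HB.instance Definition _ (F : finFieldType) (m : nat) :=
  [Finite of {vspace 'rV[F]_m} by <:].

(* A (candidate) flag of PG(n,q): the n subspaces U_1, ..., U_n of F^(n+1),
   stored as f : 'I_n -> subspaces, with U_k = f (k-1). *)
Definition flag (F : finFieldType) (n : nat) := {ffun 'I_n -> {vspace 'rV[F]_n.+1}}.

(* U_k for k = 0..n+1, with U_0 = 0 and U_(n+1) = F^(n+1). *)
Definition flagU (F : finFieldType) (n : nat) (f : flag F n) (k : nat)
  : {vspace 'rV[F]_n.+1} :=
  if k is k'.+1 then
    (if @insub _ (fun x => x < n) 'I_n k' is Some o then f o else fullv)%VS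
  else 0%VS.

Definition is_max_flag (F : finFieldType) (n : nat) (f : flag F n) : bool :=
  [forall k : 'I_n, \dim (flagU f k.+1) == k.+1] &&
  [forall k : 'I_n, (flagU f k.+1 <= flagU f k.+2)%VS].

Definition opposite (F : finFieldType) (n : nat) (f g : flag F n) : bool :=
  [forall k : 'I_n, (flagU f k.+1 :&: flagU g (n.+1 - k.+1))%VS == 0%VS].

(* type of f w.r.t. X: smallest k in [n] with X <= U_k, and n+1 if none *)
Definition flag_type (F : finFieldType) (n : nat) (f : flag F n)
  (X : {vspace 'rV[F]_n.+1}) : nat :=
  (find (fun k => (X <= flagU f k)%VS) (iota 1 n)).+1.

(* A maximal flag d opposite to a maximal flag c of W is determined by its
   point V_1, which avoids the hyperplane H of c, together with the maximal flag
   (V_(k+1) :&: H)_k of H, which is opposite to the truncation of c; conversely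
   V_(k+1) = V_1 + (V_(k+1) :&: H).  Fixing e in W outside H, the point V_1 is
   <[e + h]> for a unique h in H, so the opposite flags of c are in bijection
   with the pairs (D, h), and there are q^C(n+1,2) of them.  Counting those whose
   j-th member contains a point X goes by induction on n: if X lies in H the
   condition passes to D, and otherwise, taking e in X, it says that h lies in
   the (j-1)-th member of D.  This gives q^(C(n,2)+j-1) opposite flags when X is
   not in U_(n+1-j) of c, and none when it is.  Finally a flag has type j exactly
   when its j-th but not its (j-1)-th member contains X. *)

From Pilot Require Import Defs.
From HB Require Import structures.
From mathcomp Require Import all_boot all_order all_algebra all_field.
From mathcomp Require Import zify.
Import GRing.Theory Num.Theory.
Set Implicit Arguments. Unset Strict Implicit. Unset Printing Implicit Defensive.

Lemma card_pairs_dep (T1 T2 : finType) (A : {pred T1}) (B : T1 -> {pred T2}) :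
  #|[set p : T1 * T2 | (p.1 \in A) && (p.2 \in B p.1)]| = \sum_(x in A) #|B x|.
Proof.
rewrite -sum1_card (eq_bigl _ _ (in_set _)) /=.
transitivity (\sum_(x in A) \sum_(y in B x) 1); first by rewrite pair_big_dep.
by apply: eq_bigr => x _; rewrite sum1_card.
Qed.

Section LinesInVectorSpace.
Variables (K : fieldType) (vT : vectType K).
Implicit Types (U W D Y : {vspace vT}) (v e h : vT).
Local Open Scope ring_scope.

Lemma capv_line0 U v : v \notin U -> (U :&: <[v]> = 0)%VS.
Proof.
move=> vU; apply/eqP; rewrite -subv0; apply/subvP => x /memv_capP [xU /vlineP [a xa]].
move: xU; rewrite memv0 xa rpredZeq (negbTE vU) orbF => /eqP ->.
by rewrite scale0r.
Qed.

Lemma capv_addv_line U D v : v \notin U -> (D <= U)%VS -> ((<[v]> + D) :&: U = D)%VS.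
Proof. by move=> vU DU; rewrite capvC -vspace_modr // capv_line0 // add0v. Qed.

Lemma dimv_addv_line U D v : v \notin U -> (D <= U)%VS -> \dim (<[v]> + D) = (\dim D).+1.
Proof.
move=> vU DU; have vD : v \notin D by apply: contra vU; apply: subvP.
have := dimv_sum_cap <[v]> D.
rewrite capvC capv_line0 // dimv0 addn0 dim_vline => ->.
by have -> : v != 0 by apply: contraNneq vD => ->; rewrite mem0v.
Qed.

Lemma subv_addv_line U D Y v : v \notin U -> (D <= U)%VS -> (Y <= U)%VS ->
  (Y <= <[v]> + D)%VS = (Y <= D)%VS.
Proof.
move=> vU DU YU; apply/idP/idP => [YvD | YD]; last exact: subv_trans YD (addvSr _ _).
by rewrite -(capv_addv_line vU DU) subv_cap YvD.
Qed.

Lemma vline_addr_inj U e h1 h2 : e \notin U -> h1 \in U -> h2 \in U ->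
  <[e + h1]>%VS = <[e + h2]>%VS -> h1 = h2.
Proof.
move=> eU h1U h2U eq_lines.
have /vlineP [a def_eh2] : e + h2 \in <[e + h1]>%VS by rewrite eq_lines memv_line.
have : (1 - a) *: e \in U.
  have -> : (1 - a) *: e = a *: h1 - h2.
    have def_ae : a *: e = e + h2 - a *: h1 by rewrite def_eh2 scalerDr addrK.
    by rewrite scalerBl scale1r def_ae opprB addrCA opprD addNKr.
  by rewrite rpredB // rpredZ.
rewrite rpredZeq (negbTE eU) orbF subr_eq0 => /eqP a1.
by move: def_eh2; rewrite -a1 scale1r => /addrI.
Qed.

Lemma memv_addv_line_addr U D e h : e \notin U -> h \in U -> (D <= U)%VS ->
  (e \in <[e + h]> + D)%VS = (h \in D).
Proof.
move=> eU hU DU; have ehU : e + h \notin U by rewrite rpredDr.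
have ehS : e + h \in (<[e + h]> + D)%VS by rewrite (subvP (addvSl _ _)) ?memv_line.
rewrite -{1}(addrK h e) rpredBl // -[in RHS](capv_addv_line ehU DU).
by rewrite memv_cap hU andbT.
Qed.

Lemma addv_line_hyperplane U W v : (U <= W)%VS -> \dim W = (\dim U).+1 ->
  v \in W -> v \notin U -> (<[v]> + U = W)%VS.
Proof.
move=> UW dimW vW vU; apply/eqP; rewrite eqEdim subv_add -memvE vW UW.
by rewrite /= (dimv_addv_line vU) // dimW.
Qed.

Lemma vlineZ a v : a != 0 -> (<[a *: v]> = <[v]>)%VS.
Proof.
move=> a0; apply/eqP; rewrite eqEdim -memvE memvZ ?memv_line //.
by rewrite /= !dim_vline scaler_eq0 (negbTE a0).
Qed.

Lemma vline_vpick Y : \dim Y = 1%N -> Y = <[vpick Y]>%VS.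
Proof.
move=> dimY; have Y0 : Y != 0%VS by rewrite -dimv_eq0 dimY.
apply/eqP; rewrite eq_sym eqEdim -memvE memv_pick dimY dim_vline.
by rewrite vpick0 Y0.
Qed.

Lemma vline_hyperplane_addr U W e v : (U <= W)%VS -> \dim W = (\dim U).+1 ->
  e \in W -> e \notin U -> v \in W -> v \notin U ->
  exists2 h, h \in U & <[v]>%VS = <[e + h]>%VS.
Proof.
move=> UW dimW eW eU vW vU.
have : v \in (<[e]> + U)%VS by rewrite (addv_line_hyperplane UW).
case/memv_addP => w /vlineP [a ->] [u uU def_v].
have a0 : a != 0 by apply: contraNneq vU => a0; rewrite def_v a0 scale0r add0r.
exists (a^-1 *: u); first exact: rpredZ.
by rewrite def_v -(vlineZ _ (invr_neq0 a0)) scalerDr scalerA mulVf // scale1r.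
Qed.

End LinesInVectorSpace.

Section FlagsInSubspace.
Variables (F : finFieldType) (N : nat).
Local Notation vT := 'rV[F]_N.
Local Notation sp := {vspace vT}.

(* The notions of Defs relative to a subspace [W] in place of the whole space,
   so that the induction can pass to a hyperplane. *)
Definition flagU_in m (W : sp) (f : {ffun 'I_m -> sp}) (k : nat) : sp :=
  if k is k'.+1 then
    (if @insub _ (fun x => x < m) 'I_m k' is Some o then f o else W)%VS
  else 0%VS.
Arguments flagU_in : simpl never.

Definition is_max_flag_in m (W : sp) (f : {ffun 'I_m -> sp}) : bool :=
  [forall k : 'I_m, \dim (flagU_in W f k.+1) == k.+1] &&
  [forall k : 'I_m, (flagU_in W f k.+1 <= flagU_in W f k.+2)%VS].

Definition opposite_in m (W : sp) (f g : {ffun 'I_m -> sp}) : bool :=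
  [forall k : 'I_m, (flagU_in W f k.+1 :&: flagU_in W g (m.+1 - k.+1))%VS == 0%VS].

Definition opposite_max_flags m (W : sp) (c : {ffun 'I_m -> sp}) :=
  [set d | is_max_flag_in W d && opposite_in W c d].

Lemma flagU_in0 m W (f : {ffun 'I_m -> sp}) : flagU_in W f 0 = 0%VS.
Proof. by []. Qed.

Lemma flagU_in_ord m W (f : {ffun 'I_m -> sp}) (k : 'I_m) : flagU_in W f k.+1 = f k.
Proof. by rewrite /flagU_in valK. Qed.

Lemma flagU_in_ltn m W (f : {ffun 'I_m -> sp}) k (lt_km : k < m) :
  flagU_in W f k.+1 = f (Ordinal lt_km).
Proof. exact: (flagU_in_ord W f (Ordinal lt_km)). Qed.

Lemma flagU_in_last m W (f : {ffun 'I_m.+1 -> sp}) : flagU_in W f m.+1 = f ord_max.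
Proof. exact: (flagU_in_ord W f ord_max). Qed.

Lemma flagU_in_geq m W (f : {ffun 'I_m -> sp}) k : m <= k -> flagU_in W f k.+1 = W.
Proof. by move=> le_mk; rewrite /flagU_in insubN // -leqNgt. Qed.

Lemma is_max_flag_inP m W (f : {ffun 'I_m -> sp}) :
  (forall k, k < m -> \dim (flagU_in W f k.+1) = k.+1) ->
  (forall k, k < m -> (flagU_in W f k.+1 <= flagU_in W f k.+2)%VS) ->
  is_max_flag_in W f.
Proof.
move=> dim_f sub_f; apply/andP; split; apply/forallP => k; first exact/eqP/dim_f.
exact: sub_f.
Qed.

Lemma opposite_in_capv0 m W (f g : {ffun 'I_m -> sp}) k :
  opposite_in W f g -> k <= m.+1 ->
  (flagU_in W f k :&: flagU_in W g (m.+1 - k) = 0)%VS.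
Proof.
move=> /forallP opp_fg; case: k => [|k] le_km; first by rewrite flagU_in0 cap0v.
have [lt_km | ge_km] := ltnP k m; first exact/eqP/(opp_fg (Ordinal lt_km)).
have -> : m.+1 - k.+1 = 0 by lia.
by rewrite flagU_in0 capv0.
Qed.

Section MaxFlagIn.
Variables (m : nat) (W : sp) (f : {ffun 'I_m -> sp}).
Hypothesis max_f : is_max_flag_in W f.

Lemma dim_flagU_in k : \dim W = m.+1 -> k <= m.+1 -> \dim (flagU_in W f k) = k.
Proof.
move=> dimW; case: k => [|k] le_km; first by rewrite flagU_in0 dimv0.
have [lt_km | ge_km] := ltnP k m.
  by case/andP: max_f => /forallP /(_ (Ordinal lt_km)) /eqP.
have -> : k = m by lia.
by rewrite flagU_in_geq.
Qed.

Lemma flagU_in_leS k : k <= m -> (flagU_in W f k <= flagU_in W f k.+1)%VS.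
Proof.
case: k => [|k] le_km; first by rewrite flagU_in0 sub0v.
by case/andP: max_f => _ /forallP /(_ (Ordinal le_km)).
Qed.

Lemma flagU_in_mono a b : a <= b -> b <= m.+1 -> (flagU_in W f a <= flagU_in W f b)%VS.
Proof.
elim: b => [|b IHb]; first by rewrite leqn0 => /eqP ->.
rewrite leq_eqVlt ltnS => /predU1P [-> // | le_ab] le_bm.
exact: subv_trans (IHb le_ab (ltnW le_bm)) (flagU_in_leS le_bm).
Qed.

Lemma flagU_in_sub k : (flagU_in W f k <= W)%VS.
Proof.
have [le_km | gt_km] := leqP k m.+1.
  by have := flagU_in_mono le_km (leqnn _); rewrite flagU_in_geq.
by case: k gt_km => // k gt_km; rewrite flagU_in_geq //; lia.
Qed.

End MaxFlagIn.

Definition flag_trunc m (c : {ffun 'I_m.+1 -> sp}) : {ffun 'I_m -> sp} :=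
  [ffun k => c (widen_ord (leqnSn m) k)].

Lemma flagU_in_trunc m W (c : {ffun 'I_m.+1 -> sp}) k : k <= m.+1 ->
  flagU_in (c ord_max) (flag_trunc c) k = flagU_in W c k.
Proof.
case: k => [|k] le_km //; have [lt_km | ge_km] := ltnP k m.
  rewrite flagU_in_ltn ffunE (flagU_in_ltn _ _ (leqW lt_km)).
  by congr (c _); apply: val_inj.
have -> : k = m by lia.
by rewrite flagU_in_geq // flagU_in_last.
Qed.

Definition cone_flag m (H : sp) (e : vT) (p : {ffun 'I_m -> sp} * vT) :
  {ffun 'I_m.+1 -> sp} :=
  [ffun k : 'I_m.+1 => (<[e + p.2]> + flagU_in H p.1 k)%VS].

Definition residual_flag m (W H : sp) (d : {ffun 'I_m.+1 -> sp}) :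
  {ffun 'I_m -> sp} :=
  [ffun k : 'I_m => (flagU_in W d k.+2 :&: H)%VS].

Section Cone.
Variables (m : nat) (W : sp) (c : {ffun 'I_m.+1 -> sp}).
Hypotheses (dimW : \dim W = m.+2) (max_c : is_max_flag_in W c).
Local Notation H := (c ord_max).

Lemma dim_top : \dim H = m.+1.
Proof. by rewrite -(flagU_in_last W) (dim_flagU_in max_c dimW). Qed.

Lemma dim_top_succ : \dim W = (\dim H).+1.
Proof. by rewrite dimW dim_top. Qed.

Lemma top_sub : (H <= W)%VS.
Proof. by rewrite -(flagU_in_last W) (flagU_in_sub max_c). Qed.

Lemma exists_notin_top : exists2 e, e \in W & e \notin H.
Proof. by apply/subvPn; apply/negP => /dimvS; rewrite dimW dim_top ltnn. Qed.

Lemma max_flag_trunc : is_max_flag_in H (flag_trunc c).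
Proof.
apply: is_max_flag_inP => k lt_km.
  rewrite (flagU_in_trunc W) ?(dim_flagU_in max_c dimW) //; lia.
rewrite !(flagU_in_trunc W) ?(flagU_in_leS max_c) //; lia.
Qed.

Section Residual.
Variable d : {ffun 'I_m.+1 -> sp}.
Hypotheses (max_d : is_max_flag_in W d) (opp_d : opposite_in W c d).

Lemma point_cap_top : (flagU_in W d 1 :&: H = 0)%VS.
Proof.
have := opposite_in_capv0 opp_d (leqnSn m.+1).
by rewrite subSS subSnn capvC flagU_in_last.
Qed.

Lemma point_line : exists2 v, v \notin H & flagU_in W d 1 = <[v]>%VS.
Proof.
have dim1 : \dim (flagU_in W d 1) = 1%N by rewrite (dim_flagU_in max_d dimW).
exists (vpick (flagU_in W d 1)); last exact: vline_vpick.
apply/negP => vH; suff : flagU_in W d 1 == 0%VS by rewrite -dimv_eq0 dim1.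
by rewrite -vpick0 -memv0 -point_cap_top memv_cap memv_pick.
Qed.

Lemma flagU_in_residual k : k <= m.+1 ->
  flagU_in H (residual_flag W H d) k = (flagU_in W d k.+1 :&: H)%VS.
Proof.
case: k => [|k] le_km; first by rewrite flagU_in0 point_cap_top.
have [lt_km | ge_km] := ltnP k m; first by rewrite flagU_in_ltn ffunE.
have -> : k = m by lia.
by rewrite !flagU_in_geq // (capv_idPr top_sub).
Qed.

Lemma addv_point_top : (flagU_in W d 1 + H = W)%VS.
Proof.
apply/eqP; rewrite eqEdim subv_add (flagU_in_sub max_d) top_sub /=.
have := dimv_sum_cap (flagU_in W d 1) H.
by rewrite point_cap_top dimv0 addn0 dim_top (dim_flagU_in max_d dimW) // dimW => ->.
Qed.

Lemma flagU_in_point_residual k : k <= m.+1 ->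
  flagU_in W d k.+1 = (flagU_in W d 1 + flagU_in H (residual_flag W H d) k)%VS.
Proof.
move=> le_km; rewrite flagU_in_residual // capvC vspace_modl; last first.
  by rewrite (flagU_in_mono max_d).
by rewrite addv_point_top (capv_idPr (flagU_in_sub max_d _)).
Qed.

Lemma residual_max : is_max_flag_in H (residual_flag W H d).
Proof.
have [v vH V1_v] := point_line.
apply: is_max_flag_inP => k lt_km;
  have [le_Skm le_SSkm] : k.+1 <= m.+1 /\ k.+2 <= m.+1 by lia.
  have res_H : (flagU_in H (residual_flag W H d) k.+1 <= H)%VS.
    by rewrite flagU_in_residual // capvSr.
  apply/eqP; rewrite -eqSS -(dimv_addv_line vH res_H) -V1_v -flagU_in_point_residual //.
  by rewrite (dim_flagU_in max_d dimW).
by rewrite !flagU_in_residual // capvS // (flagU_in_leS max_d).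
Qed.

Lemma residual_opposite : opposite_in H (flag_trunc c) (residual_flag W H d).
Proof.
apply/forallP => k; have lt_km := ltn_ord k.
rewrite subSS (flagU_in_trunc W) ?flagU_in_residual; try lia.
have -> : (m - k).+1 = m.+2 - k.+1 by lia.
rewrite -subv0 -(opposite_in_capv0 opp_d (_ : k.+1 <= m.+2)); last by lia.
by rewrite capvA capvSl.
Qed.

End Residual.

Variable e : vT.
Hypotheses (eW : e \in W) (eH : e \notin H).

Lemma flagU_in_cone (D : {ffun 'I_m -> sp}) h k : h \in H -> k <= m.+1 ->
  flagU_in W (cone_flag H e (D, h)) k.+1 = (<[e + h]> + flagU_in H D k)%VS.
Proof.
move=> hH le_km; have [lt_km | ge_km] := ltnP k m.+1; first by rewrite flagU_in_ltn ffunE.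
have -> : k = m.+1 by lia.
rewrite !flagU_in_geq //; apply/esym/addv_line_hyperplane; rewrite ?top_sub ?dim_top_succ //.
  by rewrite rpredD // (subvP top_sub).
by rewrite rpredDr.
Qed.

Lemma cone_flag_max (D : {ffun 'I_m -> sp}) h : is_max_flag_in H D -> h \in H ->
  is_max_flag_in W (cone_flag H e (D, h)).
Proof.
move=> max_D hH; have ehH : (e + h)%R \notin H by rewrite rpredDr.
apply: is_max_flag_inP => k lt_km; have [le_km le_Skm] : k <= m.+1 /\ k.+1 <= m.+1 by lia.
  rewrite flagU_in_cone // (dimv_addv_line ehH) ?(flagU_in_sub max_D) //.
  by rewrite (dim_flagU_in max_D dim_top).
by rewrite !flagU_in_cone // addvS // (flagU_in_leS max_D).
Qed.

Lemma cone_flag_opposite (D : {ffun 'I_m -> sp}) h : is_max_flag_in H D -> h \in H ->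
  opposite_in H (flag_trunc c) D -> opposite_in W c (cone_flag H e (D, h)).
Proof.
move=> max_D hH opp_D; have ehH : (e + h)%R \notin H by rewrite rpredDr.
apply/forallP => k; have lt_km := ltn_ord k.
have -> : m.+2 - k.+1 = (m - k).+1 by lia.
rewrite flagU_in_cone //; last by lia.
have ck_H : (flagU_in W c k.+1 <= H)%VS.
  by rewrite -(flagU_in_last W) (flagU_in_mono max_c) //; lia.
rewrite -(capv_idPl ck_H) -capvA (capvC H) capv_addv_line ?(flagU_in_sub max_D) //.
by rewrite -flagU_in_trunc // -subSS opposite_in_capv0.
Qed.

Lemma cone_flag_inj :
  {in [pred p : {ffun 'I_m -> sp} * vT | is_max_flag_in H p.1 && (p.2 \in H)] &,
   injective (cone_flag H e)}.
Proof.
move=> [D1 h1] [D2 h2] /andP [/= max_D1 h1H] /andP [/= max_D2 h2H] eq_cones.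
have at_k (k : 'I_m.+1) := congr1 (fun f : {ffun 'I_m.+1 -> sp} => f k) eq_cones.
have eq_h : h1 = h2.
  have := at_k ord0; rewrite !ffunE /= !flagU_in0 !addv0.
  exact: vline_addr_inj eH h1H h2H.
subst h2; congr pair; apply/ffunP => k; have ehH : (e + h1)%R \notin H by rewrite rpredDr.
have := at_k (lift ord0 k); rewrite !ffunE /= => eq_k.
rewrite -(flagU_in_ord H D1) -(flagU_in_ord H D2).
rewrite -(capv_addv_line ehH (flagU_in_sub max_D1 _)) eq_k.
by rewrite capv_addv_line // (flagU_in_sub max_D2).
Qed.

Lemma cone_residual d : is_max_flag_in W d -> opposite_in W c d ->
  exists2 h, h \in H & d = cone_flag H e (residual_flag W H d, h).
Proof.
move=> max_d opp_d.
have [v vH V1_v] := point_line max_d opp_d.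
have vW : v \in W by rewrite memvE -V1_v (flagU_in_sub max_d).
have [h hH v_eh] := vline_hyperplane_addr top_sub dim_top_succ eW eH vW vH.
exists h => //; apply/ffunP => k; have le_km : k <= m.+1 by have := ltn_ord k; lia.
by rewrite ffunE -v_eh -V1_v -(flagU_in_point_residual max_d opp_d) // flagU_in_ord.
Qed.

Lemma card_cone_flags (P : pred {ffun 'I_m.+1 -> sp}) :
  #|[set d in opposite_max_flags W c | P d]| =
  #|[set p | [&& p.1 \in opposite_max_flags H (flag_trunc c), p.2 \in H
               & P (cone_flag H e p)]]|.
Proof.
rewrite -(card_in_imset (f := cone_flag H e)); last first.
  move=> p1 p2; rewrite !inE.
  move=> /and3P [/andP [max1 _] h1H _] /and3P [/andP [max2 _] h2H _].
  by apply: cone_flag_inj; rewrite inE /= ?max1 ?h1H ?max2 ?h2H.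
apply: eq_card => d; rewrite !inE.
apply/idP/imsetP => [/andP [/andP [max_d opp_d] Pd] | [[D h]]].
  have [h hH def_d] := cone_residual max_d opp_d.
  exists (residual_flag W H d, h) => //.
  by rewrite !inE residual_max // residual_opposite // hH -def_d.
rewrite !inE => /and3P [/andP [max_D opp_D] hH PD] ->.
by rewrite cone_flag_max ?cone_flag_opposite.
Qed.

Lemma card_opposite_lift (P : pred {ffun 'I_m.+1 -> sp}) (P' : pred {ffun 'I_m -> sp}) :
  (forall (D : {ffun 'I_m -> sp}) h,
     is_max_flag_in H D -> h \in H -> P (cone_flag H e (D, h)) = P' D) ->
  #|[set d in opposite_max_flags W c | P d]| =
  #|[set D in opposite_max_flags H (flag_trunc c) | P' D]| * #|F| ^ m.+1.
Proof.
move=> PP'; rewrite card_cone_flags.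
transitivity #|[set p : {ffun 'I_m -> sp} * vT |
   (p.1 \in [set D in opposite_max_flags H (flag_trunc c) | P' D]) && (p.2 \in H)]|.
  apply: eq_card => -[D h]; rewrite !inE /=.
  case: (boolP (is_max_flag_in H D)) => //= max_D.
  by case: (boolP (h \in H)) => hH /=; rewrite ?PP' ?andbT ?andbF.
by rewrite (card_pairs_dep _ (fun=> H)) sum_nat_const card_vspace dim_top.
Qed.

Lemma card_opposite_through_apex j : j <= m.+1 ->
  #|[set d in opposite_max_flags W c | (<[e]> <= flagU_in W d j.+1)%VS]| =
  #|opposite_max_flags H (flag_trunc c)| * #|F| ^ j.
Proof.
move=> le_jm; rewrite card_cone_flags.
transitivity #|[set p : {ffun 'I_m -> sp} * vT |
   (p.1 \in opposite_max_flags H (flag_trunc c)) && (p.2 \in flagU_in H p.1 j)]|.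
  apply: eq_card => -[D h]; rewrite !inE /=.
  case: (boolP (is_max_flag_in H D)) => //= max_D.
  case: (boolP (h \in H)) => [hH | hH] /=.
    by rewrite flagU_in_cone // -memvE (memv_addv_line_addr eH) // (flagU_in_sub max_D).
  rewrite andbF; symmetry; apply/negbTE/andP => -[_ /(subvP (flagU_in_sub max_D j))].
  exact/negP.
rewrite (card_pairs_dep _ (fun D => flagU_in H D j)) -sum_nat_const.
apply: eq_bigr => D; rewrite inE => /andP [max_D _].
by rewrite card_vspace (dim_flagU_in max_D dim_top).
Qed.

End Cone.

Lemma card_opposite_max_flags m (W : sp) (c : {ffun 'I_m -> sp}) :
  \dim W = m.+1 -> is_max_flag_in W c ->
  #|opposite_max_flags W c| = #|F| ^ 'C(m.+1, 2).
Proof.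
elim: m W c => [|m IHm] W c dimW max_c.
  transitivity #|{ffun 'I_0 -> sp}|; last by rewrite card_ffun card_ord.
  apply: eq_card => d; rewrite !inE /is_max_flag_in /opposite_in -andbA.
  by apply/and3P; split; apply/forallP => -[].
have [e eW eH] := exists_notin_top dimW max_c.
have := card_opposite_lift dimW max_c eW eH (P := predT) (P' := predT) (fun _ _ _ _ => erefl).
rewrite !setIdE !setIT => ->.
rewrite (IHm _ _ (dim_top dimW max_c) (max_flag_trunc dimW max_c)).
by rewrite -expnD (binS m.+1 1) bin1.
Qed.

Lemma card_opposite_max_flags_through m (W Y : sp) (c : {ffun 'I_m -> sp}) j :
  \dim W = m.+1 -> is_max_flag_in W c -> \dim Y = 1%N -> (Y <= W)%VS ->
  0 < j <= m.+1 -> ~~ (Y <= flagU_in W c (m.+1 - j))%VS ->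
  #|[set d in opposite_max_flags W c | (Y <= flagU_in W d j)%VS]| =
  #|F| ^ ('C(m, 2) + j.-1).
Proof.
elim: m W c j => [|m IHm] W c [//|j] dimW max_c dimY YW /andP [_ le_jm] Y_c.
  have -> : j = 0 by lia.
  rewrite -(card_opposite_max_flags dimW max_c); apply: eq_card => d.
  by rewrite !inE flagU_in_geq // YW andbT.
have [YH | YnH] := boolP (Y <= c ord_max)%VS.
  have [e eW eH] := exists_notin_top dimW max_c.
  case: j le_jm Y_c => [|j] le_jm Y_c.
    by move: Y_c; rewrite subSS subn0 flagU_in_last YH.
  have Y_trunc : ~~ (Y <= flagU_in (c ord_max) (flag_trunc c) (m.+1 - j.+1))%VS.
    by rewrite (flagU_in_trunc W) ?leq_subr.
  rewrite (card_opposite_lift dimW max_c eW eH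
    (P := fun d => (Y <= flagU_in W d j.+2)%VS)
    (P' := fun D => (Y <= flagU_in (c ord_max) D j.+1)%VS)).
    have max_trunc := max_flag_trunc dimW max_c.
    rewrite (IHm _ _ _ (dim_top dimW max_c) max_trunc dimY YH _ Y_trunc) //.
    by rewrite -expnD (binS m 1) bin1; congr (_ ^ _); lia.
  move=> D h max_D hH; rewrite flagU_in_cone //.
  by rewrite (subv_addv_line _ (flagU_in_sub max_D _)) // rpredDr.
have [e eW Y_e] : exists2 e, e \in W & Y = <[e]>%VS.
  by exists (vpick Y); rewrite -?(vline_vpick dimY) // memvE -(vline_vpick dimY).
have eH : e \notin c ord_max by rewrite memvE -Y_e.
rewrite Y_e (card_opposite_through_apex dimW max_c eW eH) //.
by rewrite (card_opposite_max_flags (dim_top dimW max_c) (max_flag_trunc dimW max_c)) -expnD.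
Qed.

End FlagsInSubspace.

Lemma dim_fullv_rV (K : fieldType) n : \dim (fullv : {vspace 'rV[K]_n}) = n.
Proof. by rewrite dimvf /dim /= mul1n. Qed.

Lemma flagUE (F : finFieldType) n (f : flag F n) k : flagU f k = flagU_in fullv f k.
Proof. by []. Qed.

Section FlagsOfProjectiveSpace.
Variables (F : finFieldType) (n : nat) (X : {vspace 'rV[F]_n.+1}).
Hypothesis dimX : \dim X = 1%N.

Lemma flag_type_leq (d : flag F n) k : is_max_flag d -> k <= n.+1 ->
  (flag_type d X <= k) = (X <= flagU d k)%VS.
Proof.
move=> max_d; rewrite /flag_type; set p := fun k => (X <= flagU d k)%VS.
case: k => [|k] le_kn; first by rewrite ltn0 /p flagUE flagU_in0 subv0 -dimv_eq0 dimX.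
rewrite ltnS; have [lt_kn | ge_kn] := ltnP k n; last first.
  have -> : k = n by lia.
  have := find_size p (iota 1 n); rewrite size_iota => ->.
  by rewrite /p flagUE flagU_in_geq // subvf.
apply/idP/idP => [le_find | X_k].
  have lt_find : find p (iota 1 n) < n by lia.
  have has_p : has p (iota 1 n) by rewrite has_find size_iota.
  have := nth_find 0 has_p; rewrite nth_iota // /p add1n.
  by move/subv_trans; apply; rewrite !flagUE (flagU_in_mono max_d) //; lia.
rewrite leqNgt; apply/negP => /(before_find 0).
by rewrite nth_iota // /p add1n X_k.
Qed.

Lemma card_opposite_flags_through (c : flag F n) k : is_max_flag c -> k <= n.+1 ->
  #|[set d | [&& is_max_flag d, opposite c d & (X <= flagU d k)%VS]]| =
  if flag_type c X + k < n + 2 then 0 else #|F| ^ ('C(n, 2) + k.-1).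
Proof.
move=> max_c le_kn.
have le_type : flag_type c X <= n.+1 by rewrite flag_type_leq // flagUE flagU_in_geq ?subvf.
case: ifP => [lt_sum | /negbT ge_sum].
  apply/eqP; rewrite cards_eq0; apply/eqP/setP => d; rewrite !inE.
  apply/negbTE/and3P => -[_ opp_cd X_d].
  have X_c : (X <= flagU c (n.+1 - k))%VS by rewrite -flag_type_leq //; lia.
  suff : (X <= 0)%VS by rewrite subv0 -dimv_eq0 dimX.
  rewrite -(opposite_in_capv0 opp_cd (_ : n.+1 - k <= n.+1)) ?leq_subr // subKn //.
  by rewrite subv_cap X_c.
rewrite -(card_opposite_max_flags_through (dim_fullv_rV _ _) max_c dimX (subvf X)).
- by apply: eq_card => d; rewrite !inE andbA.
- by rewrite le_kn andbT; lia.
- by rewrite -flagUE -flag_type_leq ?leq_subr //; lia.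
Qed.

Lemma card_opposite_flags_of_type (c : flag F n) j : 0 < j <= n.+1 ->
  #|[set d | [&& is_max_flag d, flag_type d X == j & opposite c d]]| =
  #|[set d | [&& is_max_flag d, opposite c d & (X <= flagU d j)%VS]]| -
  #|[set d | [&& is_max_flag d, opposite c d & (X <= flagU d j.-1)%VS]]|.
Proof.
move=> /andP [j_gt0 le_jn].
pose A k := [set d | [&& is_max_flag d, opposite c d & (X <= flagU d k)%VS]].
have A_sub : A j.-1 \subset A j.
  apply/subsetP => d; rewrite !inE => /and3P [max_d -> X_d]; rewrite max_d /=.
  by apply: subv_trans X_d _; rewrite !flagUE (flagU_in_mono max_d) //; lia.
rewrite -(cardsDS A_sub); apply: eq_card => d; rewrite !inE.
case max_d: (is_max_flag d) => //=.
by rewrite -!flag_type_leq //; lia.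
Qed.

End FlagsOfProjectiveSpace.

Lemma diff_opposite_counts (q N n i j : nat) : 0 < q -> i <= n.+1 -> 0 < j ->
  (((if i + j < n + 2 then 0 else q ^ (N + j.-1)) -
    (if i + j.-1 < n + 2 then 0 else q ^ (N + j.-2)))%N%:R : rat) =
  (if (i + j < n + 2)%N then 0
   else (q%:R - 1 + (i + j == n + 2)%N%:R) * (q%:R : rat) ^ (N%:Z + j%:Z - 2%:Z))%R.
Proof.
move=> q_gt0 le_in j_gt0; have q_neq0 : (q%:R : rat) != 0%R by rewrite pnatr_eq0 -lt0n.
case: (ltngtP (i + j) (n + 2)) => [lt_ij | gt_ij | eq_ij].
- by rewrite !ifT //; lia.
- rewrite ifF; last by lia.
  have -> : (N%:Z + j%:Z - 2%:Z)%R = (N + j.-2)%N by lia.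
  have -> : N + j.-1 = (N + j.-2).+1 by lia.
  rewrite natrB; last by rewrite expnS leq_pmull.
  by rewrite !natrX exprS (_ : (false%:R : rat) = 0%R) // addr0 mulrBl mul1r.
- rewrite ifT; last by lia.
  have -> : (N%:Z + j%:Z - 2%:Z)%R = ((N + j.-1)%N%:Z - 1)%R by lia.
  rewrite subn0 natrX expfzDr // exprN1 (_ : (true%:R : rat) = 1%R) // subrK.
  by rewrite mulrCA mulfV // mulr1.
Qed.

Theorem mainTheorem3 (F : finFieldType) (n : nat) (X : {vspace 'rV[F]_n.+1})
  (i j : nat) (c : flag F n) :
  (1 <= n)%N -> \dim X = 1%N ->
  (1 <= i <= n.+1)%N -> (1 <= j <= n.+1)%N ->
  is_max_flag c -> flag_type c X = i ->
  (#|[set d : flag F n | [&& is_max_flag d, flag_type d X == j & opposite c d]]|%:R : rat)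
  = (if (i + j < n + 2)%N then 0
     else (#|F|%:R - 1 + (i + j == n + 2)%N%:R) *
          (#|F|%:R : rat) ^ (((n ^ 2 - n) %/ 2)%:Z + j%:Z - 2%:Z))%R.
Proof.
move=> _ dimX /andP [_ le_in] j_range max_c type_c.
have [j_gt0 le_jn] := andP j_range.
rewrite card_opposite_flags_of_type //.
rewrite !(card_opposite_flags_through dimX max_c) ?type_c //; try lia.
have -> : ((n ^ 2 - n) %/ 2)%N = 'C(n, 2) by rewrite bin2 -divn2 -subn1 mulnBr muln1.
by apply: diff_opposite_counts; [apply/card_gt0P; exists 0%R | |].
Qed.
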